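(* Let $\psi\in C^\infty(P)$ be strongly convex and, for $s\in\mathbb R$, let $g_s=g_P+s\psi$ with Hessian $H_s$ on $\check P$. Let $K$ be a compact subset of $\check P$. Then there exist $s_K\ge0$ and, for every $t<-s_K$, a negative-definite island $U^K_t$ of $g_t$ with $K\subset U^K_t$, such that $U^K_t\subseteq U^K_{t'}$ whenever $t'<t<-s_K$. Moreover $\bigcup_{t<-s_K}U^K_t=\check P$.
   Context: Let $P=\{x\in\mathbb R^n:\ell_j(x)=\langle\nu_j,x\rangle+\lambda_j\ge0,\ j=1,\dots,r\}$ be a Delzant polytope with interior $\check P$, and $g_P=\frac12\sum_{j=1}^r\ell_j\log\ell_j$ on $\check P$. Strongly convex means the Hessian of $\psi$ is positive definite on $P$. For $s\in\mathbb R$, a negative-definite island of $g_s$ is a connected component of the open set $\{x\in\check P: H_s(x)\text{ is negative definite}\}$. *)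

From HB Require Import structures.
From mathcomp Require Import all_boot all_order all_algebra.
From mathcomp Require Import all_classical all_reals all_analysis.
Set Implicit Arguments. Unset Strict Implicit. Unset Printing Implicit Defensive.
Import Order.TTheory GRing.Theory Num.Theory.
Import numFieldNormedType.Exports.
Local Open Scope classical_set_scope.
Local Open Scope ring_scope.

Section Defs.
Variable R : realType.
Variable n : nat.
Notation V := 'rV[R]_n.

Definition ebasis (i : 'I_n) : V := delta_mx 0 i.

Definition iter_partial (l : seq 'I_n) (f : V -> R) : V -> R :=
  foldr (fun i g => fun x => derive g x (ebasis i)) f l.

Definition smooth_on (U : set V) (f : V -> R) : Prop :=
  forall (l : seq 'I_n),
    (forall x, U x -> forall i, derivable (iter_partial l f) x (ebasis i)) /\
    (forall x, U x -> {for x, continuous (iter_partial l f)}).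

(* C^oo(P) for a closed set P : restriction of a function smooth on an open
   neighbourhood of P *)
Definition smooth_up_to (P : set V) (f : V -> R) : Prop :=
  exists U : set V, [/\ open U, P `<=` U & smooth_on U f].

Definition hessian (f : V -> R) (x : V) : 'M[R]_n :=
  \matrix_(i, j) derive (fun y => derive f y (ebasis i)) x (ebasis j).

Definition posdef (M : 'M[R]_n) : Prop :=
  M^T = M /\ forall v : V, v != 0 -> 0 < (v *m M *m v^T) 0 0.
Definition negdef (M : 'M[R]_n) : Prop :=
  M^T = M /\ forall v : V, v != 0 -> (v *m M *m v^T) 0 0 < 0.

Variable r : nat.
Variable nu : 'I_r -> 'rV[int]_n.
Variable lam : 'I_r -> R.

Definition ell (j : 'I_r) (x : V) : R :=
  \sum_(i < n) (nu j 0 i)%:~R * x 0 i + lam j.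

Definition polytope : set V := [set x | forall j, 0 <= ell j x].

Definition is_vertex (p : V) : Prop :=
  polytope p /\ ~ (exists q : V, q != 0 /\ polytope (p + q) /\ polytope (p - q)).

Definition active (p : V) : {set 'I_r} := [set j | ell j p == 0].

(* Delzant polytope given by (nu_j, lam_j):
   - P is bounded (hence compact),
   - the description is irredundant: each {l_j = 0} cuts out a facet,
   - each nu_j is a primitive integer vector,
   - at each vertex exactly n facets meet and their normals form a Z-basis
     of Z^n. *)
Definition delzant : Prop :=
  [/\ exists M : R, forall x, polytope x -> `|x| <= M,
      forall j, exists x : V, ell j x = 0 /\ forall k, k != j -> 0 < ell k x,
      forall j (d : int), (forall i, (d %| nu j ord0 i)%Z) -> `|d| = 1 &
      forall p, is_vertex p ->
        #|active p| = n /\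
        forall z : 'rV[int]_n, exists c : 'I_r -> int,
          z = \sum_(j in active p) c j *: nu j].

Definition gP (x : V) : R := 2^-1 * \sum_(j < r) ell j x * ln (ell j x).

Definition g_s (psi : V -> R) (s : R) (x : V) : R := gP x + s * psi x.

Definition negdef_region (psi : V -> R) (s : R) : set V :=
  [set x | (interior polytope) x /\ negdef (hessian (g_s psi s) x)].

Definition negdef_island (psi : V -> R) (s : R) (U : set V) : Prop :=
  exists x, negdef_region psi s x /\ U = connected_component (negdef_region psi s) x.

End Defs.

(* On the interior of P the Hessian of g_t is H_P + t Hess psi, where
   H_P = 1/2 sum_j nu_j nu_j^T / l_j is continuous there.  As Hess psi is positive
   definite, the region where H_t is negative definite grows as t decreases, and by
   compactness of C x S^(n-1) it contains any compact C inside the interior once t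
   is small enough.  Fix x0 in the interior and let U_t be the component of x0 in
   that region.  The star of K about x0 (the union of the segments [x0, y], y in K)
   is compact, stays in the interior by convexity and is connected through x0, so
   it lies in U_t for t small; taking K = {y} shows that the U_t exhaust the
   interior. *)

From Pilot Require Import Defs.
From HB Require Import structures.
From mathcomp Require Import all_boot all_order all_algebra.
From mathcomp Require Import all_classical all_reals all_analysis.
From mathcomp Require Import lra ring.
Import Order.TTheory GRing.Theory Num.Theory.
Import numFieldNormedType.Exports.
Local Open Scope classical_set_scope.
Local Open Scope ring_scope.

Lemma cvg_sum {R : numFieldType} {T : Type} (F : set_system T) {FF : Filter F} (m : nat)
    (f : 'I_m -> T -> R) (a : 'I_m -> R) :
  (forall i, f i x @[x --> F] --> a i) -> \sum_(i < m) f i x @[x --> F] --> \sum_(i < m) a i.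
Proof. by move=> f_cvg; apply: cvg_big => //; exact: add_continuous. Qed.

Section DirectionalDerivatives.
Context {R : realType} {V : normedModType R}.

Lemma is_derive_affine (f : V -> R) (a v : V) (c : R) :
  (forall h, f (h *: v + a) = f a + h * c) -> is_derive a v f c.
Proof.
move=> f_affine.
have quotient_cvg : (fun h => h^-1 *: ((f \o shift a) (h *: v) - f a)) @ 0^' --> c.
  have quotient_cst :
      {near 0^', cst c =1 (fun h : R => h^-1 *: ((f \o shift a) (h *: v) - f a))}.
    near=> h; rewrite /= f_affine addrAC subrr add0r /GRing.scale /= mulrA mulVf ?mul1r //.
    by near: h; exact: nbhs_dnbhs_neq.
  exact: cvg_trans (near_eq_cvg quotient_cst) (cvg_cst c).
split; first exact: cvgP quotient_cvg.
exact: cvg_lim quotient_cvg.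
Unshelve. all: by end_near. Qed.

Lemma is_derive_ln_comp (v : V) {f : V -> R} {x : V} : differentiable f x -> 0 < f x ->
  is_derive x v (fun y => ln (f y)) ('D_v f x / f x).
Proof.
move=> df fx_gt0.
have dln : differentiable (@ln R) (f x).
  by apply/derivable1_diffP; apply: ex_derive; exact: is_derive1_ln.
split; first exact/diff_derivable/differentiable_comp.
rewrite deriveE; last exact: differentiable_comp.
rewrite diff_comp //= deriveE // deriv1E; last by apply: ex_derive; exact: is_derive1_ln.
by rewrite /= derive1E; have [_ ->] := is_derive1_ln fx_gt0.
Qed.

Lemma near_along_line (v : V) {x : V} {P : set V} : (\forall y \near x, P y) ->
  exists2 e, 0 < e & forall h : R, `|h| <= e -> P (h *: v + x).
Proof.
move=> Px.
have line_cvg : (fun h : R => h *: v + x) @ 0 --> x.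
  rewrite -[X in _ --> X]add0r -(scale0r v).
  by apply: cvgD; [exact: scalel_continuous | exact: cvg_cst].
have /nbhs_ballP[e /= e_gt0 He] := line_cvg _ Px.
exists (e / 2) => [|h h_le]; first by rewrite divr_gt0.
apply: He; rewrite /ball /= sub0r normrN (le_lt_trans h_le) //.
by rewrite ltr_pdivrMr // ltr_pMr // ltr1n.
Qed.

End DirectionalDerivatives.

Section Stars.
Context {R : realType} {V : normedModType R}.

Definition lerp (x0 : V) (p : V * R) : V := p.2 *: (p.1 - x0) + x0.

Definition line_segment (x0 y : V) : set V := (fun th => lerp x0 (y, th)) @` `[0, 1].

Definition star (x0 : V) (C : set V) : set V :=
  lerp x0 @` ((C `|` [set x0]) `*` `[0, 1]).

Lemma lerp_continuous x0 : continuous (lerp x0).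
Proof.
move=> p; apply: cvgD; last exact: cvg_cst.
by apply: cvgZ; [exact: cvg_snd | apply: cvgB; [exact: cvg_fst | exact: cvg_cst]].
Qed.

Lemma star_compact x0 C : compact C -> compact (star x0 C).
Proof.
move=> C_compact; apply: continuous_compact.
  by apply: continuous_subspaceT; exact: lerp_continuous.
apply: compact_setX; last exact: segment_compact.
by apply: compactU => //; exact: compact_set1.
Qed.

Lemma star_center x0 C : star x0 C x0.
Proof.
exists (x0, 0); last by rewrite /lerp /= scale0r add0r.
by split; [right | rewrite /= in_itv /= lexx ler01].
Qed.

Lemma connected_line_segment x0 y : connected (line_segment x0 y).
Proof.
apply: connected_continuous_connected; first exact: segment_connected.
apply: continuous_subspaceT => th.
by apply: cvgD; [exact: scalel_continuous | exact: cvg_cst].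
Qed.

Lemma star_sub_component (S : set V) x0 C :
  star x0 C `<=` S -> C `<=` connected_component S x0.
Proof.
move=> starS y Cy.
apply: (connected_component_max (B := line_segment x0 y)).
- by exists 0; [rewrite /= in_itv /= lexx ler01 | rewrite /lerp /= scale0r add0r].
- by move=> _ [th th01 <-]; apply: starS; exists (y, th) => //; split => //; left.
- exact: connected_line_segment.
- by exists 1; [rewrite /= in_itv /= lexx ler01 | rewrite /lerp /= scale1r subrK].
Qed.

End Stars.

Section Potential.
Context {R : realType} {n r : nat} (nu : 'I_r -> 'rV[int]_n) (lam : 'I_r -> R).
Notation V := 'rV[R]_n.
Notation ell := (ell nu lam).

Definition lin (j : 'I_r) (v : V) : R := \sum_(i < n) (nu j 0 i)%:~R * v 0 i.

Lemma ellE j x : ell j x = lin j x + lam j.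
Proof. by []. Qed.

Lemma linD j (v w : V) : lin j (v + w) = lin j v + lin j w.
Proof. by rewrite /lin -big_split; apply: eq_bigr => i _; rewrite mxE mulrDr. Qed.

Lemma linZ j c (v : V) : lin j (c *: v) = c * lin j v.
Proof. by rewrite /lin mulr_sumr; apply: eq_bigr => i _; rewrite mxE mulrCA. Qed.

Lemma linN j (v : V) : lin j (- v) = - lin j v.
Proof. by rewrite -scaleN1r linZ mulN1r. Qed.

Lemma lin_ebasis j i : lin j (ebasis R i) = (nu j 0 i)%:~R.
Proof.
rewrite /lin (bigD1 i) //= big1 => [|k ki]; rewrite /ebasis mxE.
  by rewrite !eqxx mulr1 addr0.
by rewrite (negbTE ki) andbF mulr0.
Qed.

Lemma ell_shift j h (v a : V) : ell j (h *: v + a) = ell j a + h * lin j v.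
Proof. rewrite !ellE linD linZ; ring. Qed.

Lemma ell_lerp j th (x y : V) :
  ell j (th *: (y - x) + x) = (1 - th) * ell j x + th * ell j y.
Proof. rewrite ell_shift !ellE linD linN; ring. Qed.

Lemma is_derive_ell j a v : is_derive a v (ell j) (lin j v).
Proof. by apply: is_derive_affine => h; rewrite ell_shift. Qed.

Lemma differentiable_ell j a : differentiable (ell j) a.
Proof.
have -> : ell j = \sum_(i < n) (fun y : V => (nu j 0 i)%:~R * y 0 i) + cst (lam j).
  by apply/funext => y; rewrite /Defs.ell fct_sumE.
apply: differentiableD; last exact: differentiable_cst.
apply: differentiable_sum => i.
have -> : (fun y : V => (nu j 0 i)%:~R * y 0 i) = (nu j 0 i)%:~R *: (fun y : V => y 0 i).
  by apply/funext.
by apply: differentiableZ; exact: differentiable_coord.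
Qed.

Lemma cvg_ell j (x : V) : ell j y @[y --> x] --> ell j x.
Proof. exact/differentiable_continuous/differentiable_ell. Qed.

Definition open_polytope : set V := [set x | forall j, 0 < ell j x].

Lemma open_open_polytope : open open_polytope.
Proof.
rewrite openE => x x_in.
have ell_gt0_near j : \forall y \near x, 0 < ell j y.
  exact: cvgr_gt _ (cvg_ell j x) _ (x_in j).
exact: filter_forall ell_gt0_near.
Qed.

Lemma near_open_polytope x : open_polytope x -> \forall y \near x, open_polytope y.
Proof. exact: open_open_polytope. Qed.

Lemma star_sub_open_polytope {x0 : V} {C : set V} : open_polytope x0 -> C `<=` open_polytope ->
  star x0 C `<=` open_polytope.
Proof.
move=> x0_in C_sub _ [[y th] [/= Cy]] + <- j; rewrite in_itv /= => /andP[th_ge0 th_le1].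
have y_in : open_polytope y by case: Cy => [/C_sub|->].
rewrite /lerp ell_lerp /=; have [th_lt1|th_ge1] := ltP th 1.
  by rewrite ltr_pwDl ?mulr_ge0 ?mulr_gt0 ?subr_gt0 ?(ltW (y_in j)).
have -> : th = 1 by apply/eqP; rewrite eq_le th_le1 th_ge1.
by rewrite subrr mul0r add0r mul1r.
Qed.

Lemma normal_neq0_of_primitive :
  (forall j (d : int), (forall i, (d %| nu j ord0 i)%Z) -> `|d| = 1) ->
  forall j, exists i, nu j 0 i != 0.
Proof.
move=> primitive j; apply: contrapT => /forallNP nu_j_eq0.
have /eqP : `|0 : int| = 1.
  apply: (primitive j) => i; suff -> : nu j ord0 i = 0 by exact: dvdz0.
  exact/eqP/negPn/negP/nu_j_eq0.
by rewrite normr0 eq_sym oner_eq0.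
Qed.

Lemma open_polytope_sub_interior : open_polytope `<=` interior (polytope nu lam).
Proof.
move=> x /open_open_polytope; rewrite /interior.
by apply: filterS => y y_in j; exact: ltW.
Qed.

Definition gP_deriv (v y : V) : R :=
  2^-1 * \sum_(j < r) (lin j v * ln (ell j y) + lin j v).

Definition gP_deriv2 (v w y : V) : R :=
  2^-1 * \sum_(j < r) lin j v * lin j w / ell j y.

Definition gP_hessian (y : V) : 'M[R]_n :=
  \matrix_(i, k) gP_deriv2 (ebasis R i) (ebasis R k) y.

Lemma is_derive_ln_ell j x v : 0 < ell j x ->
  is_derive x v (fun y => ln (ell j y)) (lin j v / ell j x).
Proof.
move=> ell_gt0; have := is_derive_ln_comp v (differentiable_ell j x) ell_gt0.
by rewrite (@derive_val _ _ _ _ _ _ _ (is_derive_ell j x v)).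
Qed.

Lemma is_derive_gP x v : open_polytope x -> is_derive x v (gP nu lam) (gP_deriv v x).
Proof.
move=> x_in.
have -> : gP nu lam = 2^-1 \*: \sum_(j < r) (ell j * (fun y => ln (ell j y))).
  by apply/funext => y; rewrite /gP /= fct_sumE.
apply: is_derive_eq.
apply: is_deriveZ; apply: is_derive_sum => j.
  by apply: is_deriveM; [exact: is_derive_ell | exact: is_derive_ln_ell].
rewrite /gP_deriv /GRing.scale /=; congr (_ * _); apply: eq_bigr => j _.
by rewrite /GRing.scale /= mulrCA divff ?mulr1 ?(gt_eqF (x_in j)) // addrC mulrC.
Qed.

Lemma is_derive_gP_deriv x v w : open_polytope x ->
  is_derive x w (gP_deriv v) (gP_deriv2 v w x).
Proof.
move=> x_in.
have -> : gP_deriv v =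
    2^-1 \*: \sum_(j < r) (cst (lin j v) * (fun y => ln (ell j y)) + cst (lin j v)).
  by apply/funext => y; rewrite /gP_deriv /= fct_sumE.
apply: is_derive_eq.
apply: is_deriveZ; apply: is_derive_sum => j.
  by apply: is_deriveD; apply: is_deriveM; exact: is_derive_ln_ell.
rewrite /gP_deriv2 /GRing.scale /=; congr (_ * _); apply: eq_bigr => j _.
by rewrite mulr0 !addr0 mulrA.
Qed.

Lemma gP_hessian_sym y : (gP_hessian y)^T = gP_hessian y.
Proof.
apply/matrixP => i k; rewrite !mxE /gP_deriv2; congr (_ * _).
by apply: eq_bigr => j _; rewrite [lin j _ * _]mulrC.
Qed.

Lemma cvg_gP_hessian y i k : open_polytope y ->
  gP_hessian z i k @[z --> y] --> gP_hessian y i k.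
Proof.
move=> y_in; rewrite mxE; under eq_fun do rewrite mxE.
apply: (@cvgMl_tmp _ _ (nbhs y) _); apply: cvg_sum => j.
apply: (@cvgMl_tmp _ _ (nbhs y) _); apply: (@cvgV _ _ (nbhs y) _); last exact: cvg_ell.
by rewrite gt_eqF.
Qed.

Hypothesis normal_neq0 : forall j, exists i, nu j 0 i != 0.

Lemma interior_polytope : interior (polytope nu lam) = open_polytope.
Proof.
apply/seteqP; split; last exact: open_polytope_sub_interior.
move=> x x_int j.
rewrite lt_neqAle (nbhs_singleton x_int j) andbT; apply/eqP => ell_x0.
have [i nu_i] := normal_neq0 j.
set c : R := (nu j 0 i)%:~R.
have c_neq0 : c != 0 by rewrite intr_eq0.
have [e e_gt0 He] := near_along_line (ebasis R i) x_int.
have hc_ge0 h : `|h| <= e -> 0 <= h * c.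
  by move=> /He /(_ j); rewrite ell_shift -ell_x0 add0r lin_ebasis.
have e_le : `|e| <= e by rewrite gtr0_norm.
case: (ltgtP c 0) => [c_lt0|c_gt0|/eqP]; last by rewrite (negbTE c_neq0).
  by have := hc_ge0 _ e_le; rewrite pmulr_rge0 // leNgt c_lt0.
have := hc_ge0 (- e); rewrite normrN => /(_ e_le).
by rewrite mulNr oppr_ge0 pmulr_rle0 // leNgt c_gt0.
Qed.

Hypothesis facet : forall j, exists x : V, ell j x = 0 /\ forall k, k != j -> 0 < ell k x.

Lemma open_polytope_nonempty : exists x, open_polytope x.
Proof.
case: (posnP r) => [r0|r_gt0].
  by exists 0 => j; move: (ltn_ord j); rewrite [X in (_ < X)%N]r0.
pose j0 := Ordinal r_gt0.
have [x [ell_j0 ell_k]] := facet j0.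
have [i nu_i] := normal_neq0 j0.
set c : R := (nu j0 0 i)%:~R.
have c_neq0 : c != 0 by rewrite intr_eq0.
have other_near k : \forall y \near x, k != j0 -> 0 < ell k y.
  case: (eqVneq k j0) => [->|kj0]; first by near=> y => /eqP.
  by apply: filterS (cvgr_gt _ (cvg_ell k x) _ (ell_k k kj0)) => y.
have [e e_gt0 He] := near_along_line (c *: ebasis R i) (filter_forall _ other_near).
exists (e *: (c *: ebasis R i) + x) => k.
case: (eqVneq k j0) => [->|kj0]; last by apply: He; rewrite // gtr0_norm.
rewrite ell_shift ell_j0 add0r linZ lin_ebasis -/c.
have cc_gt0 : 0 < c * c by rewrite -expr2 lt0r sqr_ge0 andbT expf_eq0 /= c_neq0.
by rewrite mulr_gt0.
Unshelve. all: by end_near. Qed.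

End Potential.

Section QuadraticForms.
Context {R : realType} {n : nat}.
Notation V := 'rV[R]_n.

Definition qf (M : 'M[R]_n) (v : V) : R := (v *m M *m v^T) 0 0.

Lemma qfE M v : qf M v = \sum_(i < n) \sum_(k < n) v 0 i * M i k * v 0 k.
Proof.
rewrite /qf !mxE (exchange_big _ _ _ _ _ (fun i k => v 0 i * M i k * v 0 k)).
by apply: eq_bigr => k _; rewrite !mxE mulr_suml.
Qed.

Lemma qfDZ (A B : 'M[R]_n) t v : qf (A + t *: B) v = qf A v + t * qf B v.
Proof.
rewrite !qfE mulr_sumr -big_split; apply: eq_bigr => i _.
rewrite mulr_sumr -big_split; apply: eq_bigr => k _.
by rewrite !mxE /=; ring.
Qed.

Lemma qfZ (A : 'M[R]_n) c v : qf A (c *: v) = c ^+ 2 * qf A v.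
Proof.
rewrite !qfE mulr_sumr; apply: eq_bigr => i _.
rewrite mulr_sumr; apply: eq_bigr => k _.
by rewrite !mxE; ring.
Qed.

Lemma negdef_sphere (M : 'M[R]_n) : M^T = M ->
  (forall v : V, `|v| = 1 -> qf M v < 0) -> negdef M.
Proof.
move=> M_sym M_neg; split => // v v_neq0.
have v_gt0 : 0 < `|v| by rewrite normr_gt0.
have -> : v = `|v| *: (`|v|^-1 *: v) by rewrite scalerA divff ?scale1r // gt_eqF.
rewrite -/(qf M _) qfZ pmulr_rlt0 ?exprn_gt0 //.
by apply: M_neg; rewrite normrZ normrV ?unitfE ?gt_eqF // normr_id mulVf // gt_eqF.
Qed.

Lemma compact_sphere : compact [set v : V | `|v| = 1].
Proof.
apply: bounded_closed_compact.
  by exists 1; split; [exact: num_real | move=> M M_gt1 v /= ->; exact: ltW].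
have -> : [set v : V | `|v| = 1] = (@Num.norm _ V) @^-1` [set 1] by [].
by apply: preimage_closed; [move=> v _; exact: norm_continuous | exact: closed_eq].
Qed.

Lemma cvg_qf (M : V -> 'M[R]_n) x v :
  (forall i k, M y i k @[y --> x] --> M x i k) ->
  qf (M p.1) p.2 @[p --> (x, v)] --> qf (M x) v.
Proof.
move=> M_cvg; rewrite qfE; under eq_cvg do rewrite qfE.
have coord_cvg (i : 'I_n) : (fun p : V * V => p.2 0 i) @ (x, v) --> v 0 i.
  apply: (@continuous_comp _ _ _ snd (fun w : V => w 0 i) (x, v)); first exact: cvg_snd.
  exact: coord_continuous.
apply: cvg_sum => i; apply: cvg_sum => k.
apply: cvgM; last exact: coord_cvg.
apply: cvgM; first exact: coord_cvg.
apply: (@continuous_comp _ _ _ fst (fun y => M y i k) (x, v)); first exact: cvg_fst.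
exact: M_cvg.
Qed.

(* Near-covering of the compact set C x S^(n-1): around each (y, v), the term
   t * qf (B _) _ dominates once t < -2 (|qf (A y) v| + 1) / qf (B y) v. *)
Lemma near_ninfty_qf_lt0 (A B : V -> 'M[R]_n) (C : set V) : compact C ->
  (forall y, C y -> forall i k, A z i k @[z --> y] --> A y i k) ->
  (forall y, C y -> forall i k, B z i k @[z --> y] --> B y i k) ->
  (forall y, C y -> forall v : V, v != 0 -> 0 < qf (B y) v) ->
  \forall t \near -oo, forall y, C y -> forall v : V, `|v| = 1 ->
    qf (A y) v + t * qf (B y) v < 0.
Proof.
move=> C_compact A_cvg B_cvg B_pos.
have /compact_near_coveringP cover := compact_setX C_compact compact_sphere.
have := cover R (ninfty_nbhs R) (fun t p => qf (A p.1) p.2 + t * qf (B p.1) p.2 < 0) _.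
move=> /(_ _)[].
  move=> -[y v] [/= Cy v_unit].
  have v_neq0 : v != 0 by apply: contra_eq_neq v_unit => ->; rewrite normr0 eq_sym oner_neq0.
  set a := qf (B y) v; set b := qf (A y) v.
  have a_gt0 : 0 < a by exact: B_pos.
  have B_near : \forall p \near (y, v), a / 2 < qf (B p.1) p.2.
    apply: cvgr_gt _ (cvg_qf _ _ v (B_cvg y Cy)) _ _.
    by rewrite ltr_pdivrMr // ltr_pMr // ltr1n.
  have A_near : \forall p \near (y, v), qf (A p.1) p.2 < b + 1.
    by apply: cvgr_lt _ (cvg_qf _ _ v (A_cvg y Cy)) _ _; rewrite ltrDl.
  near=> p t => /=.
  have Bp : a / 2 < qf (B p.1) p.2 by near: p.
  have Ap : qf (A p.1) p.2 < b + 1 by near: p.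
  have t_lt : t < - (2 * (`|b| + 1)) / a.
    by near: t; apply: nbhs_ninfty_lt; rewrite num_real.
  have bound_lt0 : - (2 * (`|b| + 1)) / a < 0.
    by rewrite mulNr oppr_lt0 divr_gt0 // mulr_gt0 // ltr_wpDl.
  have t_lt0 : t < 0 by apply: lt_trans bound_lt0.
  have ta_lt : t * a < - (2 * (`|b| + 1)) by move: t_lt; rewrite ltr_pdivlMr.
  have b_le : b <= `|b| by exact: ler_norm.
  set u := qf (B p.1) p.2 in Bp *; set w := qf (A p.1) p.2 in Ap *.
  nra.
by move=> M [M_real HM]; exists M; split => // t t_lt y Cy v v_unit; exact: (HM t t_lt (y, v)).
Unshelve. all: by end_near. Qed.

End QuadraticForms.

Definition island {R : realType} {n r : nat} (nu : 'I_r -> 'rV[int]_n) (lam : 'I_r -> R)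
    (psi : 'rV[R]_n -> R) (x0 : 'rV[R]_n) (t : R) : set 'rV[R]_n :=
  connected_component (negdef_region nu lam psi t) x0.

Section Islands.
Context {R : realType} {n r : nat} (nu : 'I_r -> 'rV[int]_n) (lam : 'I_r -> R)
  (psi : 'rV[R]_n -> R).
Notation V := 'rV[R]_n.
Notation open_polytope := (open_polytope nu lam).
Notation region := (negdef_region nu lam psi).

Hypothesis normal_neq0 : forall j, exists i, nu j 0 i != 0.
Hypothesis psi_smooth : smooth_up_to (polytope nu lam) psi.
Hypothesis psi_posdef : forall x, polytope nu lam x -> posdef (hessian psi x).

Let psi_posdef_open {y} : open_polytope y -> posdef (hessian psi y).
Proof. by move=> y_in; apply: psi_posdef => j; exact: ltW. Qed.

Lemma smooth_on_open_polytope : smooth_on open_polytope psi.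
Proof.
have [W [_ PW W_smooth]] := psi_smooth.
move=> l; have [W_der W_cont] := W_smooth l.
by split=> x /(open_polytope_sub_interior nu lam) /nbhs_singleton /PW;
  [exact: W_der | exact: W_cont].
Qed.

Lemma cvg_hessian y i k : open_polytope y ->
  hessian psi z i k @[z --> y] --> hessian psi y i k.
Proof.
move=> y_in.
have -> : (fun z => hessian psi z i k) = iter_partial [:: k; i] psi.
  by apply/funext => z; rewrite mxE.
rewrite [hessian psi y i k]mxE.
exact: (smooth_on_open_polytope [:: k; i]).2.
Qed.

Lemma hessian_g_sE t x : open_polytope x ->
  hessian (g_s nu lam psi t) x = gP_hessian nu lam x + t *: hessian psi x.
Proof.
move=> x_in; have [psi_der _] := smooth_on_open_polytope [::].
apply/matrixP => i k; rewrite !mxE.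
have grad_near : \forall y \near x, derive (g_s nu lam psi t) y (ebasis R i) =
    gP_deriv nu lam (ebasis R i) y + t * derive psi y (ebasis R i).
  near=> y; have y_in : open_polytope y by near: y; exact: near_open_polytope.
  have -> : g_s nu lam psi t = gP nu lam + t \*: psi by apply/funext.
  apply: derive_val; apply: is_deriveD; first exact: is_derive_gP.
  by apply: is_deriveZ; apply: derivableP; exact: psi_der.
rewrite (near_eq_derive _ grad_near).
apply: derive_val; apply: is_deriveD; first exact: is_derive_gP_deriv.
apply: is_deriveZ; apply: derivableP.
exact: (smooth_on_open_polytope [:: i]).1.
Unshelve. all: by end_near. Qed.

Lemma hessian_g_s_sym t x : open_polytope x ->
  (gP_hessian nu lam x + t *: hessian psi x)^T = gP_hessian nu lam x + t *: hessian psi x.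
Proof.
move=> x_in; have [psi_sym _] := psi_posdef_open x_in.
by rewrite linearD /= linearZ /= gP_hessian_sym psi_sym.
Qed.

Lemma negdef_region_decr {t t'} : t' < t -> region t `<=` region t'.
Proof.
move=> t't y [y_int [_ y_neg]]; split; first exact: y_int.
have y_in : open_polytope y by rewrite -interior_polytope.
have [_ psi_pos] := psi_posdef_open y_in.
rewrite !(hessian_g_sE _ _ y_in) in y_neg *; split; first exact: hessian_g_s_sym.
move=> v v_neq0.
have y_neg_v : qf (gP_hessian nu lam y + t *: hessian psi y) v < 0 by exact: y_neg.
suff : qf (gP_hessian nu lam y + t' *: hessian psi y) v < 0 by [].
rewrite qfDZ; rewrite qfDZ in y_neg_v; apply: lt_trans y_neg_v.
by rewrite ltrD2l ltr_pM2r ?psi_pos.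
Qed.

Lemma near_ninfty_sub_negdef_region (C : set V) : compact C -> C `<=` open_polytope ->
  \forall t \near -oo, C `<=` region t.
Proof.
move=> C_compact C_sub.
have psi_pos y : C y -> forall v : V, v != 0 -> 0 < qf (hessian psi y) v.
  by move=> Cy; have [_] := psi_posdef_open (C_sub y Cy).
have := near_ninfty_qf_lt0 (gP_hessian nu lam) (hessian psi) C C_compact
  (fun y Cy i k => cvg_gP_hessian nu lam y i k (C_sub y Cy))
  (fun y Cy i k => cvg_hessian y i k (C_sub y Cy)) psi_pos.
apply: filterS => t C_neg y Cy; have y_in := C_sub y Cy.
split; first by rewrite interior_polytope.
rewrite (hessian_g_sE _ _ y_in); apply: negdef_sphere; first exact: hessian_g_s_sym.
by move=> v v_unit; rewrite qfDZ; exact: C_neg.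
Qed.

Context {x0 : V}.
Notation island := (island nu lam psi x0).

Lemma island_sub (C : set V) t : star x0 C `<=` region t ->
  negdef_island nu lam psi t (island t) /\ C `<=` island t.
Proof.
move=> star_sub; split; last exact: star_sub_component.
by exists x0; split; first exact/star_sub/star_center.
Qed.

Lemma island_decr {t t'} : t' < t -> region t x0 -> island t `<=` island t'.
Proof.
move=> t't x0_t; apply: connected_component_max.
- exact: connected_component_refl.
- by move=> z /connected_component_sub /(negdef_region_decr t't).
- exact: component_connected.
Qed.

Hypothesis x0_in : open_polytope x0.

Lemma island_exhaust {y} : open_polytope y -> \forall t \near -oo, island t y.
Proof.
move=> y_in; have y_sub : [set y] `<=` open_polytope by move=> z ->.
have star_sub := star_sub_open_polytope nu lam x0_in y_sub.
have := near_ninfty_sub_negdef_region _ (star_compact x0 _ (@compact_set1 _ y)) star_sub.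
by apply: filterS => t /island_sub[_]; apply.
Qed.

Lemma island_family {K : set V} : compact K -> K `<=` open_polytope ->
  exists2 sK : R, 0 <= sK &
    [/\ forall t, t < - sK -> negdef_island nu lam psi t (island t) /\ K `<=` island t,
        forall t t', t' < t -> t < - sK -> island t `<=` island t' &
        \bigcup_(t in [set t | t < - sK]) island t = open_polytope].
Proof.
move=> K_compact K_sub.
have star_sub := star_sub_open_polytope nu lam x0_in K_sub.
have [M [_ star_neg]] := near_ninfty_sub_negdef_region _ (star_compact x0 K K_compact) star_sub.
exists (Num.max 0 (- M)); first by rewrite le_max lexx.
have lt_M t : t < - Num.max 0 (- M) -> t < M.
  by move=> /lt_le_trans; apply; rewrite lerNl le_max lexx orbT.
split.
- by move=> t /lt_M /star_neg /island_sub.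
- move=> t t' t't /lt_M /star_neg star_t.
  exact/(island_decr t't)/star_t/star_center.
- apply/seteqP; split=> [y [t _ /connected_component_sub[]]|y y_in].
    by rewrite interior_polytope.
  have [t [t_lt y_t]] := filter_ex (filterI (nbhs_ninfty_lt (num_real (- Num.max 0 (- M))))
    (island_exhaust y_in)).
  by exists t.
Qed.

End Islands.

Theorem mainTheorem8 (R : realType) (n r : nat)
  (nu : 'I_r -> 'rV[int]_n) (lam : 'I_r -> R) (psi : 'rV[R]_n -> R)
  (K : set 'rV[R]_n) :
  delzant nu lam ->
  smooth_up_to (polytope nu lam) psi ->
  (forall x, polytope nu lam x -> posdef (hessian psi x)) ->
  compact K -> K `<=` interior (polytope nu lam) ->
  exists sK : R, 0 <= sK /\
    exists U : R -> set 'rV[R]_n,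
      [/\ (forall t, t < - sK -> negdef_island nu lam psi t (U t) /\ K `<=` U t),
          (forall t t', t' < t -> t < - sK -> U t `<=` U t') &
          \bigcup_(t in [set t | t < - sK]) U t = interior (polytope nu lam)].
Proof.
move=> [_ facet primitive _] psi_smooth psi_posdef K_compact K_int.
have normal_neq0 := normal_neq0_of_primitive _ primitive.
have [x0 x0_in] := open_polytope_nonempty _ _ normal_neq0 facet.
rewrite interior_polytope // in K_int *.
have [sK sK_ge0 islands] :=
  island_family nu lam psi normal_neq0 psi_smooth psi_posdef x0_in K_compact K_int.
by exists sK; split; last exists (island nu lam psi x0).
Qed.
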